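(* Suppose $T\in\mathcal B(\mathcal H)$ is quasitriangular and $\{P_n\}$ is a filtration with $\|(I-P_n)TP_n\|\to0$. Let $T_n=P_nT|_{P_n\mathcal H}$. Then $j_{T_n}\to j_T$ uniformly on $\mathbb C$.
   Context: $\mathcal H$ is a complex separable Hilbert space. For an operator $A$ on a Hilbert space $\mathcal K$, $j_A(z)=\inf\{\|(A-z)h\|:h\in\mathcal K,\|h\|=1\}$. A filtration is a sequence $\{P_n\}$ of finite-rank orthogonal projections with $\operatorname{Ran}P_n\subseteq\operatorname{Ran}P_{n+1}$ and $\bigcup_n\operatorname{Ran}P_n$ dense. $T$ is quasitriangular if there is a filtration $\{P_n\}$ with $\|(I-P_n)TP_n\|\to0$. *)

From Stdlib Require Import Reals Lra ClassicalEpsilon.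
Open Scope R_scope.

Record Cx := mkC { Re : R; Im : R }.
Definition C0 : Cx := mkC 0 0.
Definition C1 : Cx := mkC 1 0.
Definition Cadd (a b : Cx) : Cx := mkC (Re a + Re b) (Im a + Im b).
Definition Copp (a : Cx) : Cx := mkC (- Re a) (- Im a).
Definition Cmul (a b : Cx) : Cx :=
  mkC (Re a * Re b - Im a * Im b) (Re a * Im b + Im a * Re b).
Definition Cconj (a : Cx) : Cx := mkC (Re a) (- Im a).

Definition is_glb (E : R -> Prop) (m : R) : Prop :=
  (forall x, E x -> m <= x) /\ (forall b, (forall x, E x -> b <= x) -> b <= m).
(* The greatest lower bound of E when it exists (arbitrary otherwise). *)
Definition Rinf (E : R -> Prop) : R :=
  epsilon (inhabits 0) (fun m => is_glb E m).

Record Hilbert := {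
  hcar :> Type;
  hzero : hcar;
  hadd : hcar -> hcar -> hcar;
  hopp : hcar -> hcar;
  hscal : Cx -> hcar -> hcar;
  hinner : hcar -> hcar -> Cx;  (* linear in the first argument *)
  hadd_assoc : forall x y z, hadd x (hadd y z) = hadd (hadd x y) z;
  hadd_comm : forall x y, hadd x y = hadd y x;
  hadd_0 : forall x, hadd x hzero = x;
  hadd_opp : forall x, hadd x (hopp x) = hzero;
  hscal_assoc : forall a b x, hscal a (hscal b x) = hscal (Cmul a b) x;
  hscal_1 : forall x, hscal C1 x = x;
  hscal_addv : forall a x y, hscal a (hadd x y) = hadd (hscal a x) (hscal a y);
  hscal_adds : forall a b x, hscal (Cadd a b) x = hadd (hscal a x) (hscal b x);
  hinner_add_l : forall x y z, hinner (hadd x y) z = Cadd (hinner x z) (hinner y z);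
  hinner_scal_l : forall a x y, hinner (hscal a x) y = Cmul a (hinner x y);
  hinner_sym : forall x y, hinner y x = Cconj (hinner x y);
  hinner_pos : forall x, 0 <= Re (hinner x x);
  hinner_def : forall x, hinner x x = C0 -> x = hzero;
  hcomplete : forall u : nat -> hcar,
    (forall eps, eps > 0 -> exists N, forall m n, (m >= N)%nat -> (n >= N)%nat ->
        sqrt (Re (hinner (hadd (u m) (hopp (u n))) (hadd (u m) (hopp (u n))))) < eps) ->
    exists l, forall eps, eps > 0 -> exists N, forall n, (n >= N)%nat ->
        sqrt (Re (hinner (hadd (u n) (hopp l)) (hadd (u n) (hopp l)))) < eps;
  hseparable : exists d : nat -> hcar, forall x eps, eps > 0 -> exists k,
        sqrt (Re (hinner (hadd x (hopp (d k))) (hadd x (hopp (d k))))) < eps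
}.

Section Ops.
Variable H : Hilbert.

Definition hsub (x y : H) : H := hadd H x (hopp H y).
Definition hnorm (x : H) : R := sqrt (Re (hinner H x x)).

Definition is_linear (A : H -> H) : Prop :=
  (forall x y, A (hadd H x y) = hadd H (A x) (A y)) /\
  (forall a x, A (hscal H a x) = hscal H a (A x)).

Definition bounded_op (A : H -> H) : Prop :=
  is_linear A /\ exists M, forall x, hnorm (A x) <= M * hnorm x.

Definition opnorm (A : H -> H) : R :=
  Rinf (fun M => 0 <= M /\ forall x, hnorm (A x) <= M * hnorm x).

Definition Ran (A : H -> H) (h : H) : Prop := exists y, h = A y.

Definition orth_proj (P : H -> H) : Prop :=
  is_linear P /\ (forall x, P (P x) = P x) /\
  (forall x y, hinner H (P x) y = hinner H x (P y)).

Fixpoint lincomb (k : nat) (c : nat -> Cx) (v : nat -> H) : H :=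
  match k with
  | O => hzero H
  | S k' => hadd H (lincomb k' c v) (hscal H (c k') (v k'))
  end.

Definition finite_rank (A : H -> H) : Prop :=
  exists (k : nat) (v : nat -> H), forall x, exists c, A x = lincomb k c v.

Definition filtration (P : nat -> H -> H) : Prop :=
  (forall n, orth_proj (P n) /\ finite_rank (P n)) /\
  (forall n h, Ran (P n) h -> Ran (P (S n)) h) /\
  (forall x eps, eps > 0 -> exists n h, Ran (P n) h /\ hnorm (hsub x h) < eps).

Definition off_diag (P T : H -> H) : H -> H := fun x => hsub (T (P x)) (P (T (P x))).

Definition quasitriangular (T : H -> H) : Prop :=
  exists P, filtration P /\ Un_cv (fun n => opnorm (off_diag (P n) T)) 0.

Definition j_on (S : H -> Prop) (A : H -> H) (z : Cx) : R :=
  Rinf (fun r => exists h, S h /\ hnorm h = 1 /\ r = hnorm (hsub (A h) (hscal H z h))).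

Definition jfun (A : H -> H) (z : Cx) : R := j_on (fun _ => True) A z.

(* j_{T_n} where T_n = P T |_{Ran P} : for h ∈ Ran P, T_n h = P (T h) *)
Definition j_compression (P T : H -> H) (z : Cx) : R :=
  j_on (Ran P) (fun h => P (T h)) z.

End Ops.

Arguments hsub {H}. Arguments hnorm {H}.

(* The easy half is a triangle inequality: for a unit vector h in Ran P_n,
   ‖(T - z)h‖ ≤ ‖(I - P_n)T P_n h‖ + ‖(T_n - z)h‖, so j_T ≤ j_{T_n} + ‖(I - P_n)T P_n‖.
   For the other half, ‖(T - z)h‖² = ‖Th‖² - 2 Re(z̄⟨Th, h⟩) + |z|² depends on the unit
   vector h only through its profile (‖Th‖², ⟨Th, h⟩), which ranges over a bounded subset
   of ℝ³. Covering that set by finitely many small cells and approximating one unit vector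
   of each cell inside Ran P_n gives an N such that for n ≥ N every profile is matched by
   a unit vector of Ran P_n. Matching profiles give close values of ‖(T - z)·‖ uniformly in
   z: for |z| large both values are of order |z|, so the error in the squares, which grows
   like |z|, is divided by |z| again. *)

From Stdlib Require Import Reals Lra Psatz Lia.
From Stdlib Require Import Classical ClassicalEpsilon FunctionalExtensionality PropExtensionality.
Open Scope R_scope.

Lemma Cx_ext (a b : Cx) : Re a = Re b -> Im a = Im b -> a = b.
Proof. destruct a, b; simpl; intros; subst; reflexivity. Qed.

Lemma Rabs_le_inv (x a : R) : Rabs x <= a -> - a <= x <= a.
Proof.
  intro Hx. destruct (Rcase_abs x); [rewrite Rabs_left in Hx | rewrite Rabs_right in Hx]; lra.
Qed.

Lemma Ropp_mult_le_Rabs (a b d : R) : Rabs b <= d -> - (a * b) <= Rabs a * d.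
Proof.
  intro Hb. assert (Hab : - (a * b) <= Rabs (a * b)) by (rewrite <- Rabs_Ropp; apply RRle_abs).
  rewrite Rabs_mult in Hab.
  assert (Rabs a * Rabs b <= Rabs a * d) by (apply Rmult_le_compat_l; [apply Rabs_pos | exact Hb]).
  lra.
Qed.

(* For s ≤ 2M + 1 the excess d (1 + 4 s) is at most e²; for larger s it is at most
   8 d x, so that y ≤ x + 4 d. *)
Lemma le_add_of_sqr_le (M x y s d e : R) :
  0 <= x -> 0 <= y -> 0 <= s -> 0 <= d -> d <= e / 4 -> d * (9 + 8 * M) <= e * e ->
  s - M <= x -> y * y <= x * x + d * (1 + 4 * s) -> y <= x + e.
Proof.
  intros x0 y0 s0 d0 de dM Xs Y.
  destruct (Rle_dec s (2 * M + 1)) as [Ls | Gs].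
  - assert (d * (1 + 4 * s) <= e * e) by (eapply Rle_trans; [| exact dM]; nra).
    apply Rsqr_incr_0_var; unfold Rsqr; nra.
  - assert (d * (1 + 4 * s) <= 8 * d * x) by nra.
    assert (y <= x + 4 * d) by (apply Rsqr_incr_0_var; unfold Rsqr; nra).
    lra.
Qed.

Lemma profile_tolerance (M e : R) : 0 <= M -> 0 < e ->
  exists d, 0 < d /\ d <= e / 4 /\ d * (9 + 8 * M) <= e * e.
Proof.
  intros M0 e0. exists (Rmin (e / 4) (e * e / (9 + 8 * M))). split; [| split].
  - apply Rmin_glb_lt; [lra | apply Rdiv_lt_0_compat; nra].
  - apply Rmin_l.
  - apply Rle_trans with (e * e / (9 + 8 * M) * (9 + 8 * M));
      [apply Rmult_le_compat_r; [lra | apply Rmin_r] | right; field; lra].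
Qed.

Section HilbertSpace.
Variable H : Hilbert.

Lemma hadd_0l (x : H) : hadd H (hzero H) x = x.
Proof. rewrite hadd_comm. apply hadd_0. Qed.

Lemma hadd_cancel_l (x y z : H) : hadd H x y = hadd H x z -> y = z.
Proof.
  intro E.
  assert (E2 : hadd H (hopp H x) (hadd H x y) = hadd H (hopp H x) (hadd H x z)) by now rewrite E.
  rewrite !hadd_assoc, (hadd_comm H (hopp H x) x), hadd_opp, !hadd_0l in E2. exact E2.
Qed.

Lemma hopp_unique (x y : H) : hadd H x y = hzero H -> y = hopp H x.
Proof. intro E. apply (hadd_cancel_l x). now rewrite E, hadd_opp. Qed.

Lemma hadd_idem_0 (x : H) : hadd H x x = x -> x = hzero H.
Proof. intro E. apply (hadd_cancel_l x). now rewrite E, hadd_0. Qed.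

Lemma hscal_0 (x : H) : hscal H C0 x = hzero H.
Proof. apply hadd_idem_0. rewrite <- hscal_adds. f_equal. apply Cx_ext; simpl; lra. Qed.

Lemma hscal_m1 (x : H) : hscal H (mkC (-1) 0) x = hopp H x.
Proof.
  apply hopp_unique. rewrite <- (hscal_1 H x) at 1. rewrite <- hscal_adds, <- (hscal_0 x).
  f_equal. apply Cx_ext; simpl; lra.
Qed.

Lemma hinner_0l (y : H) : hinner H (hzero H) y = C0.
Proof.
  assert (E := hinner_add_l H (hzero H) (hzero H) y). rewrite hadd_0 in E.
  destruct (hinner H (hzero H) y) as [a b]. unfold Cadd in E; simpl in E.
  injection E; intros; apply Cx_ext; simpl; lra.
Qed.

Lemma hinner_opp_l (x y : H) : hinner H (hopp H x) y = Copp (hinner H x y).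
Proof.
  assert (E := hinner_add_l H x (hopp H x) y). rewrite hadd_opp, hinner_0l in E.
  destruct (hinner H x y) as [a b]; destruct (hinner H (hopp H x) y) as [c d].
  unfold Cadd, C0 in E; simpl in E. injection E; intros; apply Cx_ext; simpl; lra.
Qed.

Lemma Re_hinner_sym (x y : H) : Re (hinner H y x) = Re (hinner H x y).
Proof. now rewrite hinner_sym. Qed.

Lemma Im_hinner_sym (x y : H) : Im (hinner H y x) = - Im (hinner H x y).
Proof. now rewrite hinner_sym. Qed.

Lemma Im_hinner_self (x : H) : Im (hinner H x x) = 0.
Proof. assert (E := Im_hinner_sym x x). lra. Qed.

Lemma hinner_add_r (x y z : H) :
  hinner H x (hadd H y z) = Cadd (hinner H x y) (hinner H x z).
Proof.
  apply Cx_ext.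
  - rewrite Re_hinner_sym, hinner_add_l. simpl. now rewrite !(Re_hinner_sym x).
  - rewrite Im_hinner_sym, hinner_add_l. simpl. rewrite !(Im_hinner_sym _ x). lra.
Qed.

Lemma hinner_scal_r (a : Cx) (x y : H) :
  hinner H x (hscal H a y) = Cmul (Cconj a) (hinner H x y).
Proof.
  apply Cx_ext.
  - rewrite Re_hinner_sym, hinner_scal_l. simpl. rewrite (Re_hinner_sym x), (Im_hinner_sym x). lra.
  - rewrite Im_hinner_sym, hinner_scal_l. simpl. rewrite (Re_hinner_sym x), (Im_hinner_sym x). lra.
Qed.

Lemma hinner_opp_r (x y : H) : hinner H x (hopp H y) = Copp (hinner H x y).
Proof.
  apply Cx_ext.
  - rewrite Re_hinner_sym, hinner_opp_l. simpl. now rewrite Re_hinner_sym.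
  - rewrite Im_hinner_sym, hinner_opp_l. simpl. rewrite Im_hinner_sym. lra.
Qed.

Lemma hinner_0r (y : H) : hinner H y (hzero H) = C0.
Proof.
  apply Cx_ext.
  - now rewrite Re_hinner_sym, hinner_0l.
  - rewrite Im_hinner_sym, hinner_0l. simpl. lra.
Qed.

Lemma Re_hinner_add_self (x y : H) :
  Re (hinner H (hadd H x y) (hadd H x y)) =
  Re (hinner H x x) + 2 * Re (hinner H x y) + Re (hinner H y y).
Proof. rewrite hinner_add_l, !hinner_add_r. simpl. rewrite (Re_hinner_sym x y). lra. Qed.

Lemma Re_hinner_scal_l (c : Cx) (x y : H) :
  Re (hinner H (hscal H c x) y) = Re c * Re (hinner H x y) - Im c * Im (hinner H x y).
Proof. now rewrite hinner_scal_l. Qed.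

Lemma Re_hinner_scal_r (c : Cx) (x y : H) :
  Re (hinner H x (hscal H c y)) = Re c * Re (hinner H x y) + Im c * Im (hinner H x y).
Proof. rewrite hinner_scal_r. simpl. lra. Qed.

Lemma Re_hinner_scal_self (c : Cx) (x : H) :
  Re (hinner H (hscal H c x) (hscal H c x)) = (Re c * Re c + Im c * Im c) * Re (hinner H x x).
Proof. rewrite hinner_scal_l, hinner_scal_r. simpl. rewrite Im_hinner_self. ring. Qed.

Lemma Re_hinner_self_eq0 (y : H) : Re (hinner H y y) = 0 -> y = hzero H.
Proof. intro E. apply hinner_def, Cx_ext; [exact E | apply Im_hinner_self]. Qed.

Lemma hnorm_ge0 (x : H) : 0 <= hnorm x.
Proof. apply sqrt_pos. Qed.

Lemma hnorm_sqr (x : H) : hnorm x * hnorm x = Re (hinner H x x).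
Proof. apply sqrt_sqrt, hinner_pos. Qed.

Lemma Re_cauchy_schwarz (x y : H) : Rabs (Re (hinner H x y)) <= hnorm x * hnorm y.
Proof.
  set (r := Re (hinner H x y)).
  assert (Hp := hnorm_sqr x). assert (Hq := hnorm_sqr y).
  assert (p0 := hnorm_ge0 x). assert (q0 := hnorm_ge0 y).
  destruct (Req_dec (Re (hinner H y y)) 0) as [Hb | Hb].
  { apply Re_hinner_self_eq0 in Hb. unfold r. rewrite Hb, hinner_0r. simpl.
    rewrite Rabs_R0. apply Rmult_le_pos; apply hnorm_ge0. }
  assert (b0 : 0 < Re (hinner H y y)) by (assert (T := hinner_pos H y); lra).
  (* positivity of ‖x + t y‖² at the minimising real t *)
  set (t := - r / Re (hinner H y y)).
  assert (Q := hinner_pos H (hadd H x (hscal H (mkC t 0) y))).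
  rewrite Re_hinner_add_self, Re_hinner_scal_r, Re_hinner_scal_self in Q. simpl in Q. fold r in Q.
  assert (Hrr : r * r <= Re (hinner H x x) * Re (hinner H y y)).
  { unfold t in Q. field_simplify in Q; [|lra].
    apply Rmult_le_compat_r with (r := Re (hinner H y y)) in Q; [|lra].
    unfold Rdiv in Q. rewrite Rmult_assoc, Rinv_l, Rmult_1_r in Q by lra. nra. }
  rewrite <- Hp, <- Hq in Hrr.
  apply Rsqr_incr_0_var; [rewrite <- Rsqr_abs; unfold Rsqr; nra | nra].
Qed.

Lemma hnorm_scal (c : Cx) (x : H) :
  hnorm (hscal H c x) = sqrt (Re c * Re c + Im c * Im c) * hnorm x.
Proof. unfold hnorm. rewrite Re_hinner_scal_self. apply sqrt_mult_alt. nra. Qed.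

Lemma hnorm_scal_real (t : R) (x : H) : hnorm (hscal H (mkC t 0) x) = Rabs t * hnorm x.
Proof.
  rewrite hnorm_scal. simpl. f_equal.
  replace (t * t + 0 * 0) with (Rsqr t) by (unfold Rsqr; ring). apply sqrt_Rsqr_abs.
Qed.

Lemma Im_cauchy_schwarz (x y : H) : Rabs (Im (hinner H x y)) <= hnorm x * hnorm y.
Proof.
  assert (E : Im (hinner H x y) = Re (hinner H (hscal H (mkC 0 (-1)) x) y))
    by (rewrite Re_hinner_scal_l; simpl; ring).
  assert (N : hnorm (hscal H (mkC 0 (-1)) x) = hnorm x)
    by (unfold hnorm; rewrite Re_hinner_scal_self; simpl; f_equal; ring).
  rewrite E, <- N. apply Re_cauchy_schwarz.
Qed.

Lemma hnorm_triangle (x y : H) : hnorm (hadd H x y) <= hnorm x + hnorm y.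
Proof.
  assert (E := Re_hinner_add_self x y). rewrite <- !hnorm_sqr in E.
  assert (C : Re (hinner H x y) <= hnorm x * hnorm y)
    by (eapply Rle_trans; [apply RRle_abs | apply Re_cauchy_schwarz]).
  assert (p0 := hnorm_ge0 x). assert (q0 := hnorm_ge0 y).
  apply Rsqr_incr_0_var; [unfold Rsqr; rewrite E; nra | lra].
Qed.

Lemma hnorm_opp (x : H) : hnorm (hopp H x) = hnorm x.
Proof. unfold hnorm. rewrite hinner_opp_l, hinner_opp_r. simpl. f_equal. ring. Qed.

Lemma hnorm_sub_le (x y : H) : hnorm (hsub x y) <= hnorm x + hnorm y.
Proof. unfold hsub. rewrite <- (hnorm_opp y). apply hnorm_triangle. Qed.

Lemma hsub_addK (x y : H) : hadd H (hsub x y) y = x.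
Proof.
  unfold hsub. now rewrite <- hadd_assoc, (hadd_comm H (hopp H y)), hadd_opp, hadd_0.
Qed.

Lemma hadd_hsub_hsub (x y z : H) : hadd H (hsub x y) (hsub y z) = hsub x z.
Proof. unfold hsub at 2. now rewrite hadd_assoc, hsub_addK. Qed.

Lemma hnorm_sub_ge (x y : H) : hnorm x - hnorm y <= hnorm (hsub x y).
Proof. assert (T := hnorm_triangle (hsub x y) y). rewrite hsub_addK in T. lra. Qed.

Lemma hnorm_sub_sym (x y : H) : hnorm (hsub x y) = hnorm (hsub y x).
Proof.
  assert (E : hsub y x = hopp H (hsub x y)).
  { apply hopp_unique. unfold hsub at 2. now rewrite hadd_assoc, hsub_addK, hadd_opp. }
  now rewrite E, hnorm_opp.
Qed.

Lemma Rabs_hnorm_sub_le (x y : H) : Rabs (hnorm x - hnorm y) <= hnorm (hsub x y).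
Proof.
  assert (A := hnorm_sub_ge x y). assert (B := hnorm_sub_ge y x).
  rewrite hnorm_sub_sym in B. apply Rabs_le. lra.
Qed.

Lemma hsub_scal_real (t : R) (g : H) : hsub (hscal H (mkC t 0) g) g = hscal H (mkC (t - 1) 0) g.
Proof. unfold hsub. rewrite <- hscal_m1, <- hscal_adds. f_equal. apply Cx_ext; simpl; ring. Qed.

Lemma linear_0 (A : H -> H) : is_linear H A -> A (hzero H) = hzero H.
Proof. intros [Ha _]. apply hadd_idem_0. now rewrite <- Ha, hadd_0. Qed.

Lemma linear_opp (A : H -> H) (x : H) : is_linear H A -> A (hopp H x) = hopp H (A x).
Proof.
  intro L. apply hopp_unique. rewrite <- (proj1 L), hadd_opp. now apply linear_0.
Qed.

Lemma linear_sub (A : H -> H) (x y : H) : is_linear H A -> A (hsub x y) = hsub (A x) (A y).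
Proof. intro L. unfold hsub. now rewrite (proj1 L), linear_opp. Qed.

Lemma bounded_op_nonneg (A : H -> H) :
  bounded_op H A -> exists M, 0 <= M /\ forall x, hnorm (A x) <= M * hnorm x.
Proof.
  intros [_ [M HM]]. exists (Rabs M). split; [apply Rabs_pos |]. intro x.
  eapply Rle_trans; [apply HM |].
  apply Rmult_le_compat_r; [apply hnorm_ge0 | apply RRle_abs].
Qed.

Lemma Ran_scal (Q : H -> H) (c : Cx) (g : H) :
  is_linear H Q -> Ran H Q g -> Ran H Q (hscal H c g).
Proof. intros [_ L] [y ->]. exists (hscal H c y). now rewrite L. Qed.

Lemma orth_proj_Ran (Q : H -> H) (h : H) : orth_proj H Q -> Ran H Q h -> Q h = h.
Proof. intros [_ [I _]] [y ->]. apply I. Qed.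

Lemma orth_proj_contractive (Q : H -> H) (x : H) : orth_proj H Q -> hnorm (Q x) <= hnorm x.
Proof.
  intros [_ [I S]].
  assert (E : hadd H (Q x) (hsub x (Q x)) = x).
  { unfold hsub. now rewrite hadd_comm, <- hadd_assoc, (hadd_comm H (hopp H (Q x))),
      hadd_opp, hadd_0. }
  (* Q x ⟂ x - Q x *)
  assert (Z : Re (hinner H (Q x) (hsub x (Q x))) = 0).
  { unfold hsub. rewrite hinner_add_r, hinner_opp_r. simpl. rewrite (S x (Q x)), I, (S x x). lra. }
  assert (X := Re_hinner_add_self (Q x) (hsub x (Q x))). rewrite E, Z in X.
  assert (Y := hinner_pos H (hsub x (Q x))).
  rewrite <- !hnorm_sqr in X. rewrite <- hnorm_sqr in Y.
  assert (p0 := hnorm_ge0 x). assert (q0 := hnorm_ge0 (Q x)).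
  apply Rsqr_incr_0_var; unfold Rsqr; nra.
Qed.

Lemma off_diag_bounded (T Q : H -> H) (M : R) :
  orth_proj H Q -> 0 <= M -> (forall x, hnorm (T x) <= M * hnorm x) ->
  exists M', forall x, hnorm (off_diag H Q T x) <= M' * hnorm x.
Proof.
  intros OP M0 HM. exists (2 * M). intro x. unfold off_diag.
  eapply Rle_trans; [apply hnorm_sub_le |].
  assert (A := orth_proj_contractive Q (T (Q x)) OP). assert (B := HM (Q x)).
  assert (C := orth_proj_contractive Q x OP).
  assert (M * hnorm (Q x) <= M * hnorm x) by (apply Rmult_le_compat_l; auto). lra.
Qed.

End HilbertSpace.

Lemma is_glb_Rinf (E : R -> Prop) :
  (exists x, E x) -> (forall x, E x -> 0 <= x) -> is_glb E (Rinf E).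
Proof.
  intros [x0 Ex0] Pos.
  assert (B : bound (fun y => E (- y))) by (exists 0; intros y Ey; apply Pos in Ey; lra).
  assert (I : exists y, E (- y)) by (exists (- x0); now rewrite Ropp_involutive).
  destruct (completeness _ B I) as [m [Hu Hl]].
  unfold Rinf. apply epsilon_spec. exists (- m). split.
  - intros x Ex. assert (Ex' : E (- - x)) by now rewrite Ropp_involutive.
    apply Hu in Ex'. lra.
  - intros b Hb. assert (m <= - b) by (apply Hl; intros y Ey; apply Hb in Ey; lra). lra.
Qed.

Lemma is_glb_approx (E : R -> Prop) (m e : R) :
  is_glb E m -> 0 < e -> exists x, E x /\ x < m + e.
Proof.
  intros [_ G] He. apply NNPP. intro N.
  assert (m + e <= m) by (apply G; intros x Ex; apply Rnot_lt_le; intro Lt; apply N; now exists x).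
  lra.
Qed.

Lemma opnorm_spec (H : Hilbert) (A : H -> H) :
  (exists M, forall x, hnorm (A x) <= M * hnorm x) ->
  forall x, hnorm (A x) <= opnorm H A * hnorm x.
Proof.
  intros [M HM].
  set (E := fun M0 => 0 <= M0 /\ forall x, hnorm (A x) <= M0 * hnorm x).
  assert (G : is_glb E (Rinf E)).
  { apply is_glb_Rinf; [| now intros y [Hy _]].
    exists (Rabs M). split; [apply Rabs_pos |]. intro x. eapply Rle_trans; [apply HM |].
    apply Rmult_le_compat_r; [apply hnorm_ge0 | apply RRle_abs]. }
  intro x. unfold opnorm. fold E. apply Rnot_lt_le. intro Lt.
  assert (nx : 0 < hnorm x).
  { destruct (hnorm_ge0 H x) as [| E0]; auto. rewrite <- E0 in Lt.
    destruct (is_glb_approx E _ 1 G) as [y [[_ Hy] _]]; [lra |].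
    specialize (Hy x). rewrite <- E0 in Hy. lra. }
  assert (Hq : hnorm (A x) / hnorm x <= Rinf E).
  { apply (proj2 G). intros y [_ Hy]. specialize (Hy x).
    apply Rmult_le_reg_r with (hnorm x); auto.
    unfold Rdiv. rewrite Rmult_assoc, Rinv_l, Rmult_1_r; lra. }
  apply Rmult_le_compat_r with (r := hnorm x) in Hq; [| lra].
  unfold Rdiv in Hq. rewrite Rmult_assoc, Rinv_l, Rmult_1_r in Hq; lra.
Qed.

Section LowerBounds.
Variables (H : Hilbert) (S : H -> Prop) (A : H -> H) (z : Cx).

Lemma j_on_le (h : H) : S h -> hnorm h = 1 -> j_on H S A z <= hnorm (hsub (A h) (hscal H z h)).
Proof.
  intros Sh Nh. apply is_glb_Rinf.
  - exists (hnorm (hsub (A h) (hscal H z h))), h. auto.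
  - intros r [k [_ [_ ->]]]. apply hnorm_ge0.
  - exists h. auto.
Qed.

Lemma j_on_ge (b : R) : (exists h, S h /\ hnorm h = 1) ->
  (forall h, S h -> hnorm h = 1 -> b <= hnorm (hsub (A h) (hscal H z h))) ->
  b <= j_on H S A z.
Proof.
  intros [h [Sh Nh]] Hb. apply is_glb_Rinf.
  - exists (hnorm (hsub (A h) (hscal H z h))), h. auto.
  - intros r [k [_ [_ ->]]]. apply hnorm_ge0.
  - intros r [k [Sk [Nk ->]]]. auto.
Qed.

End LowerBounds.

(* When H = {0} there are no unit vectors, and every j_on is Rinf of the empty set. *)
Lemma j_on_no_unit (H : Hilbert) (S S' : H -> Prop) (A A' : H -> H) (z : Cx) :
  (forall h : H, hnorm h <> 1) -> j_on H S A z = j_on H S' A' z.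
Proof.
  intro NoU. unfold j_on. f_equal. apply functional_extensionality. intro r.
  apply propositional_extensionality.
  split; intros [h [_ [Nh _]]]; exfalso; exact (NoU h Nh).
Qed.

Definition close3 (d : R) (a b : R * R * R) : Prop :=
  Rabs (fst (fst a) - fst (fst b)) <= d /\ Rabs (snd (fst a) - snd (fst b)) <= d /\
  Rabs (snd a - snd b) <= d.

Definition in_cell (d : R) (i : nat) (x : R) : Prop := INR i * d <= x <= INR (S i) * d.

Lemma in_cell_close (d : R) (i : nat) (x y : R) :
  in_cell d i x -> in_cell d i y -> Rabs (x - y) <= d.
Proof. unfold in_cell. rewrite S_INR. intros Hx Hy. apply Rabs_le. lra. Qed.

Lemma in_cell_exists (d : R) (K : nat) (x : R) :
  0 < d -> 0 <= x <= INR (S K) * d -> exists i, (i <= K)%nat /\ in_cell d i x.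
Proof.
  unfold in_cell. intro Hd. revert x. induction K as [| K IH]; intros x Hx.
  - exists 0%nat. split; [lia |]. simpl in *. lra.
  - destruct (Rle_dec x (INR (S K) * d)) as [Le | Gt].
    + destruct (IH x) as [i [Hi Hx']]; [lra |]. exists i. split; [lia | exact Hx'].
    + exists (S K). split; [lia | lra].
Qed.

Lemma eventually_forall_le (K : nat) (P : nat -> nat -> Prop) :
  (forall i, (i <= K)%nat -> exists N, forall n, (n >= N)%nat -> P i n) ->
  exists N, forall n, (n >= N)%nat -> forall i, (i <= K)%nat -> P i n.
Proof.
  induction K as [| K IH]; intro Hyp.
  - destruct (Hyp 0%nat (le_n 0)) as [N HN]. exists N. intros n Hn i Hi.
    replace i with 0%nat by lia. auto.
  - destruct IH as [N1 H1]; [intros i Hi; apply Hyp; lia |].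
    destruct (Hyp (S K) (le_n _)) as [N2 H2].
    exists (Nat.max N1 N2). intros n Hn i Hi.
    destruct (Nat.eq_dec i (S K)) as [-> | Ne]; [apply H2 | apply H1]; lia.
Qed.

Lemma eventually_forall_le3 (K : nat) (P : nat -> nat -> nat -> nat -> Prop) :
  (forall i j l, exists N, forall n, (n >= N)%nat -> P i j l n) ->
  exists N, forall n, (n >= N)%nat ->
    forall i j l, (i <= K)%nat -> (j <= K)%nat -> (l <= K)%nat -> P i j l n.
Proof.
  intro Hyp.
  destruct (eventually_forall_le K
    (fun i n => forall j l, (j <= K)%nat -> (l <= K)%nat -> P i j l n))
    as [N HN]; [| exists N; intros n Hn i j l Hi Hj Hl; now apply HN].
  intros i _.
  destruct (eventually_forall_le K (fun j n => forall l, (l <= K)%nat -> P i j l n)) as [N HN];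
    [| exists N; intros n Hn j l Hj Hl; now apply HN].
  intros j _. destruct (eventually_forall_le K (fun l n => P i j l n)) as [N HN];
    [intros l _; apply Hyp | exists N; intros n Hn l Hl; now apply HN].
Qed.

(* Pointwise eventual approximation of a bounded family in ℝ³ becomes uniform at the
   cost of a factor 2: only finitely many cells of side d are needed, and one
   representative per cell is approximated. *)
Lemma eventually_close3_uniform (U : Type) (Sp : U -> Prop) (f : U -> R * R * R) (B d : R)
    (Q : nat -> R * R * R -> Prop) :
  0 < d -> (forall u, Sp u -> close3 B (f u) (0, 0, 0)) ->
  (forall u, Sp u -> exists N, forall n, (n >= N)%nat -> exists x, Q n x /\ close3 d x (f u)) ->
  exists N, forall n, (n >= N)%nat -> forall u, Sp u -> exists x, Q n x /\ close3 (2 * d) x (f u).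
Proof.
  intros Hd Bnd Hyp.
  set (cell := fun u i j l =>
    in_cell d i (fst (fst (f u)) + B) /\ in_cell d j (snd (fst (f u)) + B) /\
    in_cell d l (snd (f u) + B)).
  assert (Cell : forall i j l, exists N, forall n, (n >= N)%nat ->
     forall u, Sp u -> cell u i j l -> exists x, Q n x /\ close3 (2 * d) x (f u)).
  { intros i j l. destruct (classic (exists u0, Sp u0 /\ cell u0 i j l)) as [[u0 [S0 C0]] | No].
    2: { exists 0%nat. intros n _ u Su Cu. exfalso. apply No. now exists u. }
    destruct (Hyp u0 S0) as [N HN]. exists N. intros n Hn u Su Cu.
    destruct (HN n Hn) as [x [Qx [A1 [A2 A3]]]]. exists x. split; [exact Qx |].
    destruct C0 as [C1 [C2 C3]]. destruct Cu as [D1 [D2 D3]].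
    assert (K : forall a b c, Rabs (a - b) <= d -> Rabs ((b + B) - (c + B)) <= d ->
                 Rabs (a - c) <= 2 * d).
    { intros a b c P1 P2. replace (a - c) with ((a - b) + ((b + B) - (c + B))) by ring.
      eapply Rle_trans; [apply Rabs_triang | lra]. }
    split; [| split]; eapply K; eauto using in_cell_close. }
  destruct (INR_unbounded (2 * B / d)) as [K HK].
  assert (HK' : 2 * B <= INR (S K) * d).
  { rewrite S_INR. apply Rmult_lt_compat_r with (r := d) in HK; auto.
    unfold Rdiv in HK. rewrite Rmult_assoc, Rinv_l, Rmult_1_r in HK; lra. }
  destruct (eventually_forall_le3 K _ Cell) as [N HN].
  exists N. intros n Hn u Su.
  destruct (Bnd u Su) as [B1 [B2 B3]]. simpl in B1, B2, B3. rewrite Rminus_0_r in B1, B2, B3.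
  apply Rabs_le_inv in B1. apply Rabs_le_inv in B2. apply Rabs_le_inv in B3.
  destruct (in_cell_exists d K (fst (fst (f u)) + B)) as [i [Hi Ci]]; [exact Hd | lra |].
  destruct (in_cell_exists d K (snd (fst (f u)) + B)) as [j [Hj Cj]]; [exact Hd | lra |].
  destruct (in_cell_exists d K (snd (f u) + B)) as [l [Hl Cl]]; [exact Hd | lra |].
  apply (HN n Hn i j l Hi Hj Hl u Su). unfold cell. auto.
Qed.

Lemma Ran_filtration_mono (H : Hilbert) (P : nat -> H -> H) (m n : nat) (g : H) :
  filtration H P -> (m <= n)%nat -> Ran H (P m) g -> Ran H (P n) g.
Proof. intros [_ [Mono _]] Le. induction Le; auto. Qed.

Lemma filtration_unit_approx (H : Hilbert) (P : nat -> H -> H) (h : H) (eta : R) :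
  filtration H P -> hnorm h = 1 -> 0 < eta -> exists N, forall n, (n >= N)%nat ->
    exists k, Ran H (P n) k /\ hnorm k = 1 /\ hnorm (hsub k h) <= eta.
Proof.
  intros F Nh He.
  set (e := Rmin (eta / 2) (1 / 2)).
  assert (e0 : e > 0) by (unfold e; apply Rmin_glb_lt; lra).
  assert (e1 : e <= eta / 2) by apply Rmin_l. assert (e2 : e <= 1 / 2) by apply Rmin_r.
  destruct (proj2 (proj2 F) h e e0) as [m [g [Rg Hg]]].
  assert (Rev := Rabs_hnorm_sub_le H h g). rewrite Nh in Rev. apply Rabs_le_inv in Rev.
  assert (g0 : hnorm g > 0) by lra.
  (* normalise the approximant g: ‖g/‖g‖ - g‖ = |1 - ‖g‖| ≤ ‖h - g‖ *)
  set (k := hscal H (mkC (/ hnorm g) 0) g).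
  exists m. intros n Hn. exists k. split; [| split].
  - apply Ran_scal; [apply (proj1 F n) |]. now apply (Ran_filtration_mono H P m).
  - unfold k. rewrite hnorm_scal_real, Rabs_right; [field; lra |].
    left. apply Rinv_0_lt_compat; lra.
  - rewrite <- (hadd_hsub_hsub H k g h). eapply Rle_trans; [apply hnorm_triangle |].
    unfold k. rewrite hsub_scal_real, hnorm_scal_real, (hnorm_sub_sym H g h).
    replace (Rabs (/ hnorm g - 1) * hnorm g) with (Rabs (1 - hnorm g)).
    + assert (Rabs (1 - hnorm g) <= hnorm (hsub h g)) by (apply Rabs_le; lra). lra.
    + replace (1 - hnorm g) with ((/ hnorm g - 1) * hnorm g) by (field; lra).
      rewrite Rabs_mult, (Rabs_right (hnorm g)); lra.
Qed.

Section Profile.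
Variables (H : Hilbert) (T : H -> H) (M : R).
Hypothesis M_ge0 : 0 <= M.
Hypothesis T_bounded : forall x, hnorm (T x) <= M * hnorm x.

Definition profile (h : H) : R * R * R :=
  (Re (hinner H (T h) (T h)), Re (hinner H (T h) h), Im (hinner H (T h) h)).

Lemma hnorm_shift_sqr (z : Cx) (k : H) : hnorm k = 1 ->
  hnorm (hsub (T k) (hscal H z k)) * hnorm (hsub (T k) (hscal H z k)) =
  fst (fst (profile k)) - 2 * (Re z * snd (fst (profile k)) + Im z * snd (profile k))
  + (Re z * Re z + Im z * Im z).
Proof.
  intro Nk. assert (K1 := hnorm_sqr H k). rewrite Nk in K1.
  rewrite hnorm_sqr. unfold hsub, profile. simpl.
  rewrite Re_hinner_add_self, hinner_opp_r, hinner_opp_l, hinner_opp_r. simpl.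
  rewrite Re_hinner_scal_r, Re_hinner_scal_self, <- K1. ring.
Qed.

Lemma profile_bounded (h : H) : hnorm h = 1 -> close3 (M * M + M) (profile h) (0, 0, 0).
Proof.
  intro Nh. assert (Th := T_bounded h). rewrite Nh, Rmult_1_r in Th.
  assert (t0 := hnorm_ge0 H (T h)).
  assert (C1 := Re_cauchy_schwarz H (T h) h). assert (C2 := Im_cauchy_schwarz H (T h) h).
  rewrite Nh, Rmult_1_r in C1, C2.
  unfold close3, profile. simpl. rewrite !Rminus_0_r, <- hnorm_sqr, Rabs_right by nra.
  split; [| split]; nra.
Qed.

Lemma profile_continuous (h k : H) (eta : R) : is_linear H T ->
  hnorm h = 1 -> hnorm k = 1 -> hnorm (hsub k h) <= eta ->
  close3 (2 * M * (M + 1) * eta) (profile k) (profile h).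
Proof.
  intros L Nh Nk Hd.
  assert (D : hnorm (hsub (T k) (T h)) <= M * eta).
  { rewrite <- linear_sub by exact L. eapply Rle_trans; [apply T_bounded |].
    now apply Rmult_le_compat_l. }
  assert (Tk := T_bounded k). assert (Th := T_bounded h). rewrite Nk in Tk. rewrite Nh in Th.
  assert (tk0 := hnorm_ge0 H (T k)). assert (th0 := hnorm_ge0 H (T h)).
  assert (sd0 := hnorm_ge0 H (hsub k h)).
  assert (Mh : hnorm (T h) * hnorm (hsub k h) <= M * eta) by (apply Rmult_le_compat; lra).
  assert (E : hinner H (T k) k =
    Cadd (hinner H (hsub (T k) (T h)) k) (Cadd (hinner H (T h) (hsub k h)) (hinner H (T h) h)))
    by (rewrite <- hinner_add_r, hsub_addK, <- hinner_add_l, hsub_addK; reflexivity).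
  assert (C1 := Re_cauchy_schwarz H (hsub (T k) (T h)) k).
  assert (C2 := Re_cauchy_schwarz H (T h) (hsub k h)).
  assert (C3 := Im_cauchy_schwarz H (hsub (T k) (T h)) k).
  assert (C4 := Im_cauchy_schwarz H (T h) (hsub k h)).
  rewrite Nk in C1, C3.
  assert (Mp : 2 * M * eta <= 2 * M * (M + 1) * eta) by nra.
  unfold close3, profile. simpl. split; [| split].
  - rewrite <- !hnorm_sqr.
    replace (hnorm (T k) * hnorm (T k) - hnorm (T h) * hnorm (T h))
      with ((hnorm (T k) - hnorm (T h)) * (hnorm (T k) + hnorm (T h))) by ring.
    rewrite Rabs_mult, (Rabs_right (hnorm (T k) + hnorm (T h))) by lra.
    assert (R1 := Rabs_hnorm_sub_le H (T k) (T h)).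
    apply Rle_trans with ((M * eta) * (2 * M)); [| nra].
    apply Rmult_le_compat; try lra; apply Rabs_pos.
  - rewrite E. simpl.
    match goal with |- Rabs ?a <= _ =>
      replace a with (Re (hinner H (hsub (T k) (T h)) k) + Re (hinner H (T h) (hsub k h)))
        by ring end.
    eapply Rle_trans; [apply Rabs_triang | lra].
  - rewrite E. simpl.
    match goal with |- Rabs ?a <= _ =>
      replace a with (Im (hinner H (hsub (T k) (T h)) k) + Im (hinner H (T h) (hsub k h)))
        by ring end.
    eapply Rle_trans; [apply Rabs_triang | lra].
Qed.

Lemma hnorm_shift_le_of_close3 (h k : H) (d e : R) (z : Cx) :
  hnorm h = 1 -> hnorm k = 1 -> d <= e / 4 -> d * (9 + 8 * M) <= e * e ->
  close3 d (profile k) (profile h) ->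
  hnorm (hsub (T k) (hscal H z k)) <= hnorm (hsub (T h) (hscal H z h)) + e.
Proof.
  intros Nh Nk de dM [Ha [Hr Hi]].
  set (s := sqrt (Re z * Re z + Im z * Im z)).
  assert (s0 : 0 <= s) by apply sqrt_pos.
  assert (ss : s * s = Re z * Re z + Im z * Im z) by (apply sqrt_sqrt; nra).
  assert (Zr : Rabs (Re z) <= s)
    by (apply Rsqr_incr_0_var; auto; rewrite <- Rsqr_abs; unfold Rsqr; nra).
  assert (Zi : Rabs (Im z) <= s)
    by (apply Rsqr_incr_0_var; auto; rewrite <- Rsqr_abs; unfold Rsqr; nra).
  assert (Xs : s - M <= hnorm (hsub (T h) (hscal H z h))).
  { assert (R1 := hnorm_sub_ge H (hscal H z h) (T h)).
    rewrite hnorm_sub_sym, hnorm_scal, Nh, Rmult_1_r in R1. fold s in R1.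
    assert (Th := T_bounded h). rewrite Nh, Rmult_1_r in Th. lra. }
  assert (d0 : 0 <= d) by (eapply Rle_trans; [apply Rabs_pos | exact Ha]).
  apply (le_add_of_sqr_le M _ _ s d e); auto using hnorm_ge0.
  rewrite (hnorm_shift_sqr z k Nk), (hnorm_shift_sqr z h Nh).
  assert (P1 := Ropp_mult_le_Rabs (Re z) _ d Hr).
  assert (P2 := Ropp_mult_le_Rabs (Im z) _ d Hi).
  apply Rabs_le_inv in Ha.
  assert (Rabs (Re z) * d <= s * d) by (apply Rmult_le_compat_r; lra).
  assert (Rabs (Im z) * d <= s * d) by (apply Rmult_le_compat_r; lra).
  nra.
Qed.

Lemma filtration_profile_approx (P : nat -> H -> H) (d : R) :
  is_linear H T -> filtration H P -> 0 < d -> exists N, forall n, (n >= N)%nat ->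
    forall h, hnorm h = 1 ->
    exists k, Ran H (P n) k /\ hnorm k = 1 /\ close3 d (profile k) (profile h).
Proof.
  intros L F d0.
  set (eta := d / 2 / (2 * M * (M + 1) + 1)).
  assert (eta0 : 0 < eta) by (unfold eta; apply Rdiv_lt_0_compat; [lra | nra]).
  assert (Heta : 2 * M * (M + 1) * eta <= d / 2).
  { assert ((2 * M * (M + 1) + 1) * eta = d / 2) by (unfold eta; field; nra). nra. }
  destruct (eventually_close3_uniform H (fun h => hnorm h = 1) profile (M * M + M) (d / 2)
     (fun n x => exists k, Ran H (P n) k /\ hnorm k = 1 /\ x = profile k))
    as [N HN]; [lra | exact profile_bounded | |].
  - intros h Nh. destruct (filtration_unit_approx H P h eta F Nh eta0) as [N HN].
    exists N. intros n Hn. destruct (HN n Hn) as [k [Rk [Nk Dk]]].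
    exists (profile k). split; [now exists k |].
    destruct (profile_continuous h k eta L Nh Nk Dk) as [A1 [A2 A3]].
    split; [| split]; lra.
  - exists N. intros n Hn h Nh. destruct (HN n Hn h Nh) as [x [[k [Rk [Nk ->]]] Ck]].
    exists k. replace d with (2 * (d / 2)) by field. auto.
Qed.

End Profile.

Lemma jfun_le_compression (H : Hilbert) (T Q : H -> H) (M : R) (z : Cx) :
  orth_proj H Q -> 0 <= M -> (forall x, hnorm (T x) <= M * hnorm x) ->
  (exists h, Ran H Q h /\ hnorm h = 1) ->
  jfun H T z <= j_compression H Q T z + opnorm H (off_diag H Q T).
Proof.
  intros OP M0 HM Hu.
  enough (jfun H T z - opnorm H (off_diag H Q T) <= j_compression H Q T z) by lra.
  apply j_on_ge; [exact Hu |]. intros h Rh Nh.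
  assert (Bd := opnorm_spec H (off_diag H Q T) (off_diag_bounded H T Q M OP M0 HM) h).
  change (off_diag H Q T h) with (hsub (T (Q h)) (Q (T (Q h)))) in Bd.
  rewrite (orth_proj_Ran H Q h OP Rh), Nh, Rmult_1_r in Bd.
  assert (L : jfun H T z <= hnorm (hsub (T h) (hscal H z h))) by (apply j_on_le; auto).
  rewrite <- (hadd_hsub_hsub H (T h) (Q (T h))) in L.
  assert (Tr := hnorm_triangle H (hsub (T h) (Q (T h))) (hsub (Q (T h)) (hscal H z h))).
  lra.
Qed.

Lemma compression_le_jfun (H : Hilbert) (T Q : H -> H) (M d e : R) (z : Cx) :
  orth_proj H Q -> (forall x, hnorm (T x) <= M * hnorm x) ->
  d <= e / 4 -> d * (9 + 8 * M) <= e * e ->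
  (exists h : H, hnorm h = 1) ->
  (forall h, hnorm h = 1 ->
     exists k, Ran H Q k /\ hnorm k = 1 /\ close3 d (profile H T k) (profile H T h)) ->
  j_compression H Q T z <= jfun H T z + e.
Proof.
  intros OP HM de dM Hu Match.
  enough (j_compression H Q T z - e <= jfun H T z) by lra.
  apply j_on_ge; [destruct Hu as [h Nh]; now exists h |]. intros h _ Nh.
  destruct (Match h Nh) as [k [Rk [Nk Ck]]].
  assert (L : j_compression H Q T z <= hnorm (Q (hsub (T k) (hscal H z k)))).
  { rewrite linear_sub, (proj2 (proj1 OP)), (orth_proj_Ran H Q k OP Rk) by apply (proj1 OP).
    exact (j_on_le H (Ran H Q) (fun h => Q (T h)) z k Rk Nk). }
  assert (C := orth_proj_contractive H Q (hsub (T k) (hscal H z k)) OP).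
  assert (K := hnorm_shift_le_of_close3 H T M HM h k d e z Nh Nk de dM Ck).
  lra.
Qed.

Theorem theorem3p5 (H : Hilbert) (T : H -> H) (P : nat -> H -> H) :
  bounded_op H T ->
  quasitriangular H T ->
  filtration H P ->
  Un_cv (fun n => opnorm H (off_diag H (P n) T)) 0 ->
  forall eps, eps > 0 -> exists N, forall n, (n >= N)%nat -> forall z : Cx,
    Rabs (j_compression H (P n) T z - jfun H T z) < eps.
Proof.
  intros HT _ F Cv eps Heps.
  destruct (bounded_op_nonneg H T HT) as [M [M0 HM]].
  destruct (classic (exists u : H, hnorm u = 1)) as [Hu | NoU].
  2: { exists 0%nat. intros n _ z. unfold j_compression, jfun.
       rewrite (j_on_no_unit H (Ran H (P n)) (fun _ => True) (fun h => P n (T h)) T z),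
         Rminus_diag, Rabs_R0 by (intros h Nh; apply NoU; now exists h).
       lra. }
  set (e := eps / 2).
  destruct (profile_tolerance M e M0 ltac:(unfold e; lra)) as [d [d0 [de dM]]].
  destruct (filtration_profile_approx H T M M0 HM P d (proj1 HT) F d0) as [N2 Match].
  destruct (Cv e ltac:(unfold e; lra)) as [N1 Off].
  exists (Nat.max N1 N2). intros n Hn z.
  assert (Dn := Off n ltac:(lia)). unfold R_dist in Dn. rewrite Rminus_0_r in Dn.
  apply Rabs_def2 in Dn.
  assert (Hun : exists k, Ran H (P n) k /\ hnorm k = 1).
  { destruct Hu as [u Nu]. destruct (Match n ltac:(lia) u Nu) as [k [Rk [Nk _]]]. now exists k. }
  assert (Lo := jfun_le_compression H T (P n) M z (proj1 (proj1 F n)) M0 HM Hun).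
  assert (Up := compression_le_jfun H T (P n) M d e z (proj1 (proj1 F n)) HM de dM Hu
                  (Match n ltac:(lia))).
  apply Rabs_def1; unfold e in *; lra.
Qed.
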